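(* There is a universal constant $c>0$ such that the following holds. Let $P$ be an irreducible, aperiodic transition matrix on a finite state space $G$, reversible with respect to the probability measure $\pi$, with $\lambda$, $\pi_{\min}$, $\pi_{\max}$ as in the context. Then for all $x\neq y$ in $G$, $$\Pr_x[T_y<T_x^+]\ge \frac{c(1-\lambda)\pi_{\min}}{\pi_{\max}}.$$ In other words $u(P)\ge c(1-\lambda)\pi_{\min}/\pi_{\max}$.
   Context: $(X_t)$ is the chain with transition matrix $P$. $\lambda=\max_{j>1}|\lambda_j|$, where $1=\lambda_1>\lambda_2\ge\dots\ge\lambda_n>-1$ are the eigenvalues of $P$. $\pi_{\min}=\min_x\pi(x)$ and $\pi_{\max}=\max_x\pi(x)$. $T_y=\inf\{t\ge0:X_t=y\}$ and $T_x^+=\inf\{t\ge1:X_t=x\}$. $\Pr_x$ is the law of the chain started at $x$. $u(P):=\min_{x\ne y}\Pr_x[T_y<T_x^+]$. *)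

From HB Require Import structures.
From Stdlib Require Import Reals Lra ClassicalEpsilon FunctionalExtensionality.
From mathcomp Require Import all_boot all_algebra.

Set Implicit Arguments.
Unset Strict Implicit.
Unset Printing Implicit Defensive.

Definition Reqb (a b : R) : bool := if Req_EM_T a b then true else false.

Lemma Reqb_axiom : Equality.axiom Reqb.
Proof. move=> a b; rewrite /Reqb; case: Req_EM_T => h; by constructor. Qed.

HB.instance Definition _ := hasDecEq.Build R Reqb_axiom.

Definition Rfind (P : pred R) (n : nat) : option R :=
  match excluded_middle_informative (exists x, P x) with
  | left h => Some (proj1_sig (constructive_indefinite_description _ h))
  | right _ => None
  end.

Lemma Rfind_correct P n x : Rfind P n = Some x -> P x.
Proof.
rewrite /Rfind; case: excluded_middle_informative => // h [<-].
exact: proj2_sig (constructive_indefinite_description _ h).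
Qed.

Lemma Rfind_complete (P : pred R) : (exists x, P x) -> exists n, Rfind P n.
Proof. move=> h; exists 0%N; rewrite /Rfind; by case: excluded_middle_informative. Qed.

Lemma Rfind_ext (P Q : pred R) : P =1 Q -> Rfind P =1 Rfind Q.
Proof.
move=> e; have -> : P = Q by apply: functional_extensionality.
by [].
Qed.

HB.instance Definition _ :=
  hasChoice.Build R Rfind_correct Rfind_complete Rfind_ext.

Lemma R_addA : associative Rplus. Proof. move=> *; ring. Qed.
Lemma R_addC : commutative Rplus. Proof. move=> *; ring. Qed.
Lemma R_add0 : left_id R0 Rplus. Proof. move=> *; ring. Qed.
Lemma R_addN : left_inverse R0 Ropp Rplus. Proof. move=> *; ring. Qed.

HB.instance Definition _ := GRing.isZmodule.Build R R_addA R_addC R_add0 R_addN.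

Lemma R_mulA : associative Rmult. Proof. move=> *; ring. Qed.
Lemma R_mulC : commutative Rmult. Proof. move=> *; ring. Qed.
Lemma R_mul1 : left_id R1 Rmult. Proof. move=> *; ring. Qed.
Lemma R_mulD : left_distributive Rmult Rplus. Proof. move=> *; ring. Qed.
Lemma R_one_neq0 : (R1 : R) != R0.
Proof. apply/eqP; exact: R1_neq_R0. Qed.

HB.instance Definition _ :=
  GRing.Zmodule_isComNzRing.Build R R_mulA R_mulC R_mul1 R_mulD R_one_neq0.

Local Open Scope R_scope.

Definition transition_matrix (n : nat) (P : 'M[R]_n) : Prop :=
  (forall x y, 0 <= P x y) /\ (forall x, (\sum_(y < n) P x y)%R = 1).

Fixpoint mpow (n : nat) (P : 'M[R]_n) (t : nat) : 'M[R]_n :=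
  match t with
  | O => 1%:M
  | S t' => (mpow P t' *m P)%R
  end.

Definition irreducible (n : nat) (P : 'M[R]_n) : Prop :=
  forall x y : 'I_n, exists t : nat, 0 < mpow P t x y.

Definition aperiodic (n : nat) (P : 'M[R]_n) : Prop :=
  forall x : 'I_n, forall d : nat,
    (forall t : nat, (0 < t)%N -> 0 < mpow P t x x -> (d %| t)%N) -> d = 1%N.

Definition probability (n : nat) (pi : 'I_n -> R) : Prop :=
  (forall x, 0 <= pi x) /\ (\sum_(x < n) pi x)%R = 1.

Definition reversible (n : nat) (P : 'M[R]_n) (pi : 'I_n -> R) : Prop :=
  forall x y, pi x * P x y = pi y * P y x.

(* pi_min and pi_max (the seed x0 is any state; it does not affect the value) *)
Definition pi_min (n : nat) (pi : 'I_n -> R) (x0 : 'I_n) : R :=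
  \big[Rmin/pi x0]_(z < n) pi z.
Definition pi_max (n : nat) (pi : 'I_n -> R) (x0 : 'I_n) : R :=
  \big[Rmax/pi x0]_(z < n) pi z.

(* s lists the eigenvalues of P with algebraic multiplicity, in
   non-increasing order: 1 = lambda_1 >= lambda_2 >= ... >= lambda_n *)
Definition Rgeb (a b : R) : bool := if Rle_dec b a then true else false.

Definition eigenvalue_list (n : nat) (P : 'M[R]_n) (s : seq R) : Prop :=
  char_poly P = (\prod_(a <- s) ('X - a%:P))%R /\ sorted Rgeb s.

Definition slem (s : seq R) : R := \big[Rmax/0]_(a <- behead s) Rabs a.

(* Taboo first-passage vectors for the chain started at x:
   fp P x y k z = Pr_x[X_k = z, X_j \notin {x,y} for 1 <= j < k]  (k >= 1). *)
Fixpoint fp (n : nat) (P : 'M[R]_n) (x y : 'I_n) (k : nat) (z : 'I_n) : R :=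
  match k with
  | O => if z == x then 1 else 0
  | S k' =>
      (\sum_(w < n | (k' == 0)%N || ((w != x) && (w != y))) fp P x y k' w * P w z)%R
  end.

(* Pr_x[T_y = k+1 < T_x^+] *)
Definition escape_term (n : nat) (P : 'M[R]_n) (x y : 'I_n) (k : nat) : R :=
  fp P x y k.+1 y.

(* p = Pr_x[T_y < T_x^+] = \sum_{k>=1} Pr_x[T_y = k < T_x^+] *)
Definition escape_prob (n : nat) (P : 'M[R]_n) (x y : 'I_n) (p : R) : Prop :=
  infinite_sum (escape_term P x y) p.

(* Let P be irreducible and reversible with respect to pi, with eigenvalues
   1 = l_1, l_2, ..., l_n and lambda = max_{j>1} |l_j| < 1.  We prove
     (1 - lambda) pi(y) / (pi(x) + pi(y)) <= Pr_x[T_y < T_x^+],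
   which gives the theorem with c = 1/2, since pi(y) >= pi_min and
   pi(x) + pi(y) <= 2 pi_max.

   By Cayley-Hamilton, the sequence a_k = <f, P^k f>_pi satisfies the
      recurrence prod_{j>1} (S - l_j) a = 0 when f has pi-mean zero, so
      |a_k| grows at most like poly(k) lambda^k.  Self-adjointness gives
      a_j^2 <= a_0 a_{2j}; iterating along j = 2^m shows a_1 <= lambda a_0,
      i.e. the Rayleigh bound <f, P f> <= lambda <f, f>.  With Cauchy-Schwarz
      this yields (1 - lambda) <psi, L psi> <= <L psi, L psi> for L = I - P.
   2. Potential-theoretic step.  Apply this to psi = G_K / pi, where G_K is
      the Green function of the chain started at x, killed on returning to x
      or hitting y, truncated at time K.  Both sides are computed in terms of
      the partial escape sums and of the mass still alive at time K + 1.
   3. The alive mass is small for infinitely many K (the Green function has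
      bounded total mass); letting K -> oo gives
      (1 - lambda) p / pi(x) <= p^2 / pi(x) + p^2 / pi(y), and p > 0.          *)

From Pilot Require Import Defs.
From Stdlib Require Import Reals Lra Classical FunctionalExtensionality.
From mathcomp Require Import all_boot all_algebra.

Set Implicit Arguments.
Unset Strict Implicit.
Unset Printing Implicit Defensive.

Local Open Scope R_scope.

(* The commutative ring structure on R given in Defs is built from Rplus,
   Rmult, ...; this tactic unfolds the generic MathComp operations on R to
   the Stdlib ones so that ring/field/lra apply. *)
Ltac unfold_R_ring_ops := repeat match goal with
  | |- context [@Algebra.zero ?T] => change (@Algebra.zero T) with R0
  | |- context [@GRing.one ?T] => change (@GRing.one T) with R1
  | |- context [@Algebra.add ?T ?a ?b] => change (@Algebra.add T a b) with (Rplus a b)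
  | |- context [@GRing.mul ?T ?a ?b] => change (@GRing.mul T a b) with (Rmult a b)
  | |- context [@Algebra.opp ?T ?a] => change (@Algebra.opp T a) with (Ropp a)
  | |- context [@fun_of_matrix ?T ?m ?k ?M ?i ?j] =>
      lazymatch T with
      | R => fail
      | _ => change (@fun_of_matrix T m k M i j) with (@fun_of_matrix R m k M i j)
      end
  end.

Lemma Rdiv_nonneg a b : 0 <= a -> 0 < b -> 0 <= a / b.
Proof. by move=> ha hb; apply: Rmult_le_pos => //; apply/Rlt_le/Rinv_0_lt_compat. Qed.

Definition rsum n (F : 'I_n -> R) : R := (\sum_(z < n) F z)%R.

Lemma rsum_ext n (F G : 'I_n -> R) : (forall z, F z = G z) -> rsum F = rsum G.
Proof. by move=> h; apply: eq_bigr => z _; apply: h. Qed.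

Lemma rsum_add n (F G : 'I_n -> R) :
  rsum (fun z => F z + G z) = rsum F + rsum G.
Proof. exact: big_split. Qed.

Lemma rsum_scal n c (F : 'I_n -> R) : rsum (fun z => c * F z) = c * rsum F.
Proof. by symmetry; apply: GRing.mulr_sumr. Qed.

Lemma rsum_opp n (F : 'I_n -> R) : rsum (fun z => - F z) = - rsum F.
Proof.
rewrite (rsum_ext (G := fun z => -1 * F z)); last by move=> z; ring.
by rewrite rsum_scal; ring.
Qed.

Lemma rsum_sub n (F G : 'I_n -> R) :
  rsum (fun z => F z - G z) = rsum F - rsum G.
Proof. by rewrite /Rminus -rsum_opp -rsum_add. Qed.

Lemma rsum0 n : rsum (fun _ : 'I_n => 0) = 0.
Proof. exact: big1. Qed.

Lemma rsum_ge0 n (F : 'I_n -> R) : (forall z, 0 <= F z) -> 0 <= rsum F.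
Proof.
move=> h; apply: (big_ind (fun v => 0 <= v)) => //; first exact: Rle_refl.
by move=> a b ha hb; change (0 <= a + b); lra.
Qed.

Lemma rsum_le n (F G : 'I_n -> R) : (forall z, F z <= G z) -> rsum F <= rsum G.
Proof.
move=> h; have := @rsum_ge0 _ (fun z => G z - F z).
by rewrite rsum_sub => /(_ (fun z => ltac:(have := h z; lra))); lra.
Qed.

Lemma rsum_exch n m (F : 'I_n -> 'I_m -> R) :
  rsum (fun z => rsum (fun w => F z w)) = rsum (fun w => rsum (fun z => F z w)).
Proof. exact: exchange_big. Qed.

Lemma rsum_D1 n (F : 'I_n -> R) z0 :
  rsum F = F z0 + rsum (fun z => if z != z0 then F z else 0).
Proof. by rewrite /rsum (bigD1 z0) //= big_mkcond. Qed.

Lemma rsum_D2 n (F : 'I_n -> R) x y : x != y ->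
  rsum F = F x + F y + rsum (fun z => if (z != x) && (z != y) then F z else 0).
Proof.
move=> hxy; rewrite (rsum_D1 F x) (rsum_D1 _ y) eq_sym hxy Rplus_assoc.
by congr (_ + (_ + _)); apply: rsum_ext => z; case: (z != x); case: (z != y).
Qed.

Lemma rsum_ge_term n (F : 'I_n -> R) z0 : (forall z, 0 <= F z) -> F z0 <= rsum F.
Proof.
move=> h; rewrite (rsum_D1 F z0).
suff : 0 <= rsum (fun z => if z != z0 then F z else 0) by lra.
by apply: rsum_ge0 => z; case: (z != z0) => //; apply: Rle_refl.
Qed.

Lemma rsum_pos_ex n (F : 'I_n -> R) : 0 < rsum F -> exists z, 0 < F z.
Proof.
move=> h; apply: NNPP => hn.
have : rsum F <= rsum (fun _ : 'I_n => 0).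
  by apply: rsum_le => z; apply: Rnot_lt_le => hz; apply: hn; exists z.
by rewrite rsum0; lra.
Qed.

Lemma rsum_eq0_each n (F : 'I_n -> R) :
  (forall z, 0 <= F z) -> rsum F <= 0 -> forall z, F z = 0.
Proof. by move=> h hs z; have := rsum_ge_term z h; have := h z; lra. Qed.

Lemma finite_argmax n (g : 'I_n.+1 -> R) : exists zm, forall z, g z <= g zm.
Proof.
suff [zm hzm] : exists zm, forall z, z \in enum 'I_n.+1 -> g z <= g zm.
  by exists zm => z; apply: hzm; rewrite mem_enum.
elim: (enum _) => [|a s [zm hzm]]; first by exists ord0.
case: (Rle_dec (g a) (g zm)) => h.
  by exists zm => z; rewrite inE => /orP [/eqP -> //|]; apply: hzm.
by exists a => z; rewrite inE => /orP [/eqP -> |/hzm]; [apply: Rle_refl|lra].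
Qed.

(* (S - a) u, where S is the shift of sequences, and the product
   (S - a_1) ... (S - a_m) u for r = [:: a_1; ...; a_m]. *)
Definition shift_sub (a : R) (u : nat -> R) (k : nat) : R := u k.+1 - a * u k.

Fixpoint shift_poly (r : seq R) (u : nat -> R) : nat -> R :=
  if r is a :: r' then shift_sub a (shift_poly r' u) else u.

Lemma pow_succ_le t m : 0 <= t -> t ^ m.+1 + t ^ m <= (t + 1) ^ m.+1.
Proof.
move=> ht; have htm : t ^ m <= (t + 1) ^ m by apply: pow_incr; lra.
rewrite /=; have := pow_le t m ht; nra.
Qed.

Lemma shift_sub_growth rho a D m (w : nat -> R) :
  0 < rho -> Rabs a <= rho -> 0 <= D ->
  (forall k, Rabs (shift_sub a w k) <= D * (INR k + 1) ^ m * rho ^ k) ->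
  forall k, Rabs (w k) <= (Rabs (w O) + D / rho) * (INR k + 1) ^ m.+1 * rho ^ k.
Proof.
move=> hr ha hD h; set E := Rabs (w O) + D / rho.
have hDr : 0 <= D / rho by apply: Rdiv_nonneg.
have hE0 : 0 <= E by have := Rabs_pos (w O); rewrite /E; lra.
have hDE : D <= E * rho.
  rewrite /E Rmult_plus_distr_r /Rdiv Rmult_assoc Rinv_l; last lra.
  by have := Rabs_pos (w O); nra.
elim=> [|k IH]; first by rewrite /= Rplus_0_l pow1 /E; lra.
set t := INR k + 1; have ht : 0 <= t by have := pos_INR k; rewrite /t; lra.
have hrk : 0 <= rho ^ k by apply: pow_le; lra.
have htm : 0 <= t ^ m by apply: pow_le.
have step : Rabs (w k.+1) <= rho * Rabs (w k) + D * t ^ m * rho ^ k.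
  have -> : w k.+1 = a * w k + shift_sub a w k by rewrite /shift_sub; ring.
  apply: Rle_trans (Rabs_triang _ _) _; rewrite Rabs_mult.
  by apply: Rplus_le_compat (h k); apply: Rmult_le_compat_r (Rabs_pos _) ha.
have old : rho * Rabs (w k) <= rho * (E * t ^ m.+1 * rho ^ k).
  by apply: Rmult_le_compat_l; [lra|apply: IH].
have new : D * t ^ m * rho ^ k <= (E * rho) * t ^ m * rho ^ k.
  by apply: Rmult_le_compat_r => //; apply: Rmult_le_compat_r.
have degree : E * (t ^ m.+1 + t ^ m) * rho ^ k.+1 <= E * (t + 1) ^ m.+1 * rho ^ k.+1.
  apply: Rmult_le_compat_r; first by apply: pow_le; lra.
  by apply: Rmult_le_compat_l => //; apply: pow_succ_le.
rewrite S_INR -/t [rho ^ k.+1]/=; rewrite [rho ^ k.+1]/= in degree; lra.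
Qed.

Lemma shift_poly_growth rho (r : seq R) :
  0 < rho -> (forall a, List.In a r -> Rabs a <= rho) ->
  forall m D (u : nat -> R), 0 <= D ->
  (forall k, Rabs (shift_poly r u k) <= D * (INR k + 1) ^ m * rho ^ k) ->
  exists E, 0 <= E /\ forall k, Rabs (u k) <= E * (INR k + 1) ^ (m + size r) * rho ^ k.
Proof.
move=> hr; elim: r => [|a r IH] hin m D u hD h.
  by exists D; split => // k; rewrite addn0; apply: h.
have ha : Rabs a <= rho by apply: hin; left.
have hE : 0 <= Rabs (shift_poly r u O) + D / rho.
  by have := Rabs_pos (shift_poly r u O); have := Rdiv_nonneg hD hr; lra.
have [E [hE0 hE1]] := IH (fun b hb => hin b (or_intror hb)) m.+1 _ u hE
  (shift_sub_growth hr ha hD h).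
by exists E; split => // k; rewrite /= addnS -addSn; apply: hE1.
Qed.

Lemma annihilated_growth rho (r : seq R) (u : nat -> R) :
  0 < rho -> (forall a, List.In a r -> Rabs a <= rho) ->
  (forall k, shift_poly r u k = 0) ->
  exists E, 0 <= E /\ forall k, Rabs (u k) <= E * (INR k + 1) ^ size r * rho ^ k.
Proof.
move=> hr hin h0.
have bound0 : forall k, Rabs (shift_poly r u k) <= 0 * (INR k + 1) ^ 0 * rho ^ k.
  by move=> k; rewrite h0 Rabs_R0 !Rmult_0_l; apply: Rle_refl.
have [E [hE hu]] := shift_poly_growth hr hin (Rle_refl 0) bound0.
by exists E; split => // k; rewrite -(add0n (size r)); apply: hu.
Qed.

Lemma bernoulli_ineq y N : 1 <= y -> 1 + INR N * (y - 1) <= y ^ N.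
Proof.
move=> hy; elim: N => [|N IH]; first by rewrite /=; lra.
by rewrite S_INR /=; have := pow_R1_Rle y N hy; nra.
Qed.

Lemma poly_le_exp d y : 1 < y -> exists C, 0 < C /\ forall N, (INR N + 1) ^ d <= C * y ^ N.
Proof.
elim: d y => [|d IH] y hy.
  by exists 1; split => [|N]; [lra|rewrite /= Rmult_1_l; apply: pow_R1_Rle; lra].
set z := sqrt y.
have hz : 1 < z by rewrite /z -sqrt_1; apply: sqrt_lt_1; lra.
have hzz : z * z = y by rewrite /z sqrt_sqrt; lra.
have [C [hC hC1]] := IH z hz.
have hi : 0 < / (z - 1) by apply: Rinv_0_lt_compat; lra.
have hlin : forall N, INR N + 1 <= (1 + / (z - 1)) * z ^ N.
  move=> N; have hb := bernoulli_ineq N (Rlt_le _ _ hz).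
  have hN := pos_INR N; have hinv : / (z - 1) * (z - 1) = 1 by field; lra.
  have : (1 + / (z - 1)) * (1 + INR N * (z - 1)) <= (1 + / (z - 1)) * z ^ N.
    by apply: Rmult_le_compat_l; lra.
  nra.
exists (C * (1 + / (z - 1))); split; first by apply: Rmult_lt_0_compat; lra.
move=> N; rewrite /= (_ : y ^ N = z ^ N * z ^ N); last by rewrite -Rpow_mult_distr hzz.
have p1 : 0 <= (INR N + 1) ^ d by apply: pow_le; have := pos_INR N; lra.
have p2 : 0 <= INR N + 1 by have := pos_INR N; lra.
by have := Rmult_le_compat _ _ _ _ p2 p1 (hlin N) (hC1 N); lra.
Qed.

Lemma exp_not_poly_bounded x K d : 1 < x -> 0 <= K ->
  ~ (forall m : nat, x ^ (2 ^ m)%N <= K * (INR (2 ^ m)%N + 1) ^ d).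
Proof.
move=> hx hK hall; set y := sqrt x.
have hy : 1 < y by rewrite /y -sqrt_1; apply: sqrt_lt_1; lra.
have hyy : y * y = x by rewrite /y sqrt_sqrt; lra.
have [C [hC hC1]] := poly_le_exp d hy.
have bounded : forall m : nat, y ^ (2 ^ m)%N <= K * C.
  move=> m; set N := (2 ^ m)%N.
  have e : x ^ N = y ^ N * y ^ N by rewrite -hyy Rpow_mult_distr.
  have hyN : 0 < y ^ N by apply: pow_lt; lra.
  suff : y ^ N * y ^ N <= K * C * y ^ N by nra.
  rewrite -e; apply: Rle_trans (hall m) _; rewrite Rmult_assoc.
  by apply: Rmult_le_compat_l.
have [m hm] := INR_archimed (y - 1) (K * C) ltac:(lra).
have hNr : INR m <= INR (2 ^ m)%N by apply/le_INR/leP/ltnW/ltn_expl.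
by have := bernoulli_ineq (2 ^ m)%N (Rlt_le _ _ hy); have := bounded m; nra.
Qed.

Lemma log_convex_doubling (a : nat -> R) b :
  0 < a O -> 0 <= b -> a 1%N = a O * b ->
  (forall j, (a j) ^ 2 <= a O * a (2 * j)%N) ->
  forall m, a O * b ^ (2 ^ m)%N <= a (2 ^ m)%N.
Proof.
move=> ha0 hb hab hlc; elim=> [|m IH]; first by rewrite expn0 /= Rmult_1_r hab; lra.
set N := (2 ^ m)%N; rewrite expnS -/N.
have hpos : 0 <= a O * b ^ N by apply: Rmult_le_pos; [lra|apply: pow_le].
have sq : (a O * b ^ N) ^ 2 <= (a N) ^ 2 by apply: pow_incr.
have -> : b ^ (2 * N) = b ^ N * b ^ N by rewrite -pow_add mul2n -addnn.
apply: (Rmult_le_reg_l (a O)) => //; have := hlc N; rewrite /= in sq *; nra.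
Qed.

Lemma log_convex_ratio_bound (a : nat -> R) rho E d :
  0 < rho -> 0 <= a O -> 0 <= E ->
  (forall j, (a j) ^ 2 <= a O * a (2 * j)%N) ->
  (forall k, Rabs (a k) <= E * (INR k + 1) ^ d * rho ^ k) ->
  a 1%N <= rho * a O.
Proof.
move=> hr ha0 hE hlc hgrowth.
case: (Rle_lt_or_eq_dec _ _ ha0) => ha0'; last first.
  have := hlc 1%N; rewrite -ha0' Rmult_0_l => h.
  suff : a 1%N = 0 by lra.
  nra.
apply: Rnot_lt_le => hlt; set b := a 1%N / a O.
have hb : rho < b.
  apply: (Rmult_lt_reg_r (a O)) => //.
  by rewrite /b /Rdiv Rmult_assoc Rinv_l; lra.
have hab : a 1%N = a O * b by rewrite /b; field; lra.
have big := log_convex_doubling ha0' (ltac:(lra) : 0 <= b) hab hlc.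
apply: (exp_not_poly_bounded (x := b / rho) (K := E / a O) (d := d)).
- by apply: (Rmult_lt_reg_r rho) => //; rewrite /Rdiv Rmult_assoc Rinv_l; lra.
- by apply: Rdiv_nonneg.
move=> m; set N := (2 ^ m)%N.
have hrN : 0 < rho ^ N by apply: pow_lt.
have h : a O * b ^ N <= E * (INR N + 1) ^ d * rho ^ N.
  exact: Rle_trans (big m) (Rle_trans _ _ _ (Rle_abs _) (hgrowth N)).
rewrite /Rdiv Rpow_mult_distr pow_inv.
have -> : b ^ N * / rho ^ N = (a O * b ^ N) * / a O * / rho ^ N by field; lra.
have -> : E * / a O * (INR N + 1) ^ d = (E * (INR N + 1) ^ d * rho ^ N) * / a O * / rho ^ N.
  by field; lra.
apply: Rmult_le_compat_r; first by apply/Rlt_le/Rinv_0_lt_compat.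
by apply: Rmult_le_compat_r; first by apply/Rlt_le/Rinv_0_lt_compat.
Qed.

Lemma partial_sum_le (u : nat -> R) l :
  (forall k, 0 <= u k) -> infinite_sum u l -> forall K, sum_f_R0 u K <= l.
Proof. by move=> hu hl; apply: growing_ineq hl => K /=; have := hu K.+1; lra. Qed.

Lemma le_of_perturbations u v C e0 :
  0 < e0 -> (forall e, 0 < e -> e < e0 -> u <= v + C * e) -> u <= v.
Proof.
move=> he0 h; apply: Rnot_lt_le => huv.
have hC : 0 < Rabs C + 1 by have := Rabs_pos C; lra.
set e := Rmin (e0 / 2) ((u - v) / (2 * (Rabs C + 1))).
have he : 0 < e by apply: Rmin_glb_lt; apply: Rdiv_lt_0_compat; lra.
have he1 : e < e0 by apply: Rle_lt_trans (Rmin_l _ _) _; lra.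
have he2 : (Rabs C + 1) * e <= (u - v) / 2.
  have := Rmin_r (e0 / 2) ((u - v) / (2 * (Rabs C + 1))); rewrite -/e => hr.
  have := Rmult_le_compat_l _ _ _ (Rlt_le _ _ hC) hr.
  by have -> : (Rabs C + 1) * ((u - v) / (2 * (Rabs C + 1))) = (u - v) / 2 by field; lra.
have hCe : C * e <= Rabs C * e by apply: Rmult_le_compat_r; [lra | apply: Rle_abs].
by have := h e he he1; lra.
Qed.

(* The escape inequality with perturbed parameters (rho = l + e, escape
   partial sum q within e of p, alive mass m <= e) implies the unperturbed
   one up to an error O(e). *)
Lemma perturbed_escape_bound l p q m e a b B :
  0 <= l -> 0 <= p -> 0 < a -> 0 < b -> 0 <= B -> 0 < e -> l + e <= 1 ->
  0 <= q -> Rabs (q - p) < e -> 0 <= m -> m <= e ->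
  (1 - (l + e)) * (q * a) <= (q + m) ^ 2 * a + q ^ 2 * b + m ^ 2 * B ->
  (1 - l) * (p * a) <=
  p ^ 2 * a + p ^ 2 * b + ((1 + p) * a + (4 * p + 4) * a + (2 * p + 1) * b + B) * e.
Proof.
move=> hl hp ha hb hB he hle hq hqp hm0 hme hineq.
have [hq1 hq2] : p - e <= q /\ q <= p + e by have := Rabs_def2 _ _ hqp; lra.
have hlin : (1 - l) * p - e * (1 + p) <= (1 - (l + e)) * q.
  have : (1 - (l + e)) * (p - e) <= (1 - (l + e)) * q by apply: Rmult_le_compat_l; lra.
  nra.
have L1 := Rmult_le_compat_r a _ _ (Rlt_le _ _ ha) hlin.
have L2 : (q + m) ^ 2 <= p ^ 2 + e * (4 * p + 4).
  have : (q + m) ^ 2 <= (p + 2 * e) ^ 2 by apply: pow_incr; lra.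
  nra.
have L3 : q ^ 2 <= p ^ 2 + e * (2 * p + 1).
  have : q ^ 2 <= (p + e) ^ 2 by apply: pow_incr; lra.
  nra.
have L4 : m ^ 2 * B <= e * B by apply: Rmult_le_compat_r => //; nra.
have L2' := Rmult_le_compat_r a _ _ (Rlt_le _ _ ha) L2.
have L3' := Rmult_le_compat_r b _ _ (Rlt_le _ _ hb) L3.
nra.
Qed.

Lemma quadratic_discriminant A B C :
  0 <= C -> (forall t, 0 <= A - 2 * t * B + t * t * C) -> B ^ 2 <= A * C.
Proof.
move=> hC hq; case: (Rle_lt_or_eq_dec _ _ hC) => hC0.
  have := hq (B / C).
  have -> : A - 2 * (B / C) * B + B / C * (B / C) * C = (A * C - B ^ 2) / C by field; lra.
  move=> h; have key : 0 <= (A * C - B ^ 2) / C * C by nra.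
  have e : (A * C - B ^ 2) / C * C = A * C - B ^ 2 by field; lra.
  lra.
rewrite -hC0 Rmult_0_r; case: (Req_dec B 0) => hB; first by rewrite hB; lra.
have := hq ((A + 1) / (2 * B)); rewrite -hC0 Rmult_0_r Rplus_0_r.
have -> : A - 2 * ((A + 1) / (2 * B)) * B = -1 by field.
lra.
Qed.

Section ReversibleChain.
Variable n' : nat.
Local Notation n := n'.+1.
Variable P : 'M[R]_n.
Variable pi : 'I_n -> R.
Hypothesis hT : transition_matrix P.
Hypothesis hI : irreducible P.
Hypothesis hpi : probability pi.
Hypothesis hR : reversible P pi.

Definition Pv (f : 'I_n -> R) (z : 'I_n) : R := rsum (fun w => P z w * f w).
Definition ip (f g : 'I_n -> R) : R := rsum (fun z => pi z * f z * g z).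
Definition mean (f : 'I_n -> R) : R := rsum (fun z => pi z * f z).

Lemma P_ge0 z w : 0 <= P z w. Proof. by case: hT. Qed.
Lemma P_row z : rsum (fun w => P z w) = 1. Proof. by case: hT => _; apply. Qed.
Lemma pi_ge0 z : 0 <= pi z. Proof. by case: hpi. Qed.
Lemma pi_sum : rsum pi = 1. Proof. by case: hpi. Qed.

Lemma Pv_lin f g a : Pv (fun z => f z - a * g z) = fun z => Pv f z - a * Pv g z.
Proof.
apply: functional_extensionality => z; rewrite /Pv -rsum_scal -rsum_sub.
by apply: rsum_ext => w; ring.
Qed.

Lemma Pv_const c : Pv (fun _ => c) = fun _ => c.
Proof.
apply: functional_extensionality => z; rewrite /Pv.
rewrite (rsum_ext (G := fun w => c * P z w)); last by move=> w; ring.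
by rewrite rsum_scal P_row; ring.
Qed.

Lemma mean_lin f g a : mean (fun z => f z - a * g z) = mean f - a * mean g.
Proof. by rewrite /mean -rsum_scal -rsum_sub; apply: rsum_ext => z; ring. Qed.

Lemma mean_Pv f : mean (Pv f) = mean f.
Proof.
rewrite /mean /Pv.
rewrite (rsum_ext (G := fun z => rsum (fun w => pi z * P z w * f w))); last first.
  by move=> z; rewrite -rsum_scal; apply: rsum_ext => w; ring.
rewrite rsum_exch; apply: rsum_ext => w.
rewrite (rsum_ext (G := fun z => (pi w * f w) * P w z)); last by move=> z; rewrite hR; ring.
by rewrite rsum_scal P_row; ring.
Qed.

Lemma ip_Pv f g : ip f (Pv g) = ip (Pv f) g.
Proof.
rewrite /ip /Pv.
rewrite (rsum_ext (G := fun z => rsum (fun w => pi z * P z w * f z * g w))); last first.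
  by move=> z; rewrite -rsum_scal; apply: rsum_ext => w; ring.
rewrite rsum_exch; apply: rsum_ext => w.
rewrite (rsum_ext (G := fun z => (pi w * g w) * (P w z * f z))); last first.
  by move=> z; rewrite hR; ring.
by rewrite rsum_scal; ring.
Qed.

Lemma ip_lin2 f g h a : ip f (fun z => g z - a * h z) = ip f g - a * ip f h.
Proof. by rewrite /ip -rsum_scal -rsum_sub; apply: rsum_ext => z; ring. Qed.

Lemma ip_sym f g : ip f g = ip g f.
Proof. by apply: rsum_ext => z; ring. Qed.

Lemma ip_ge0 f : 0 <= ip f f.
Proof. by apply: rsum_ge0 => z; have := pi_ge0 z; have := Rle_0_sqr (f z); rewrite /Rsqr; nra. Qed.

Lemma ip_zero f : ip f (fun _ => 0) = 0.
Proof. by rewrite /ip (rsum_ext (G := fun _ => 0)) ?rsum0 // => z; ring. Qed.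

Lemma cauchy_schwarz f g : (ip f g) ^ 2 <= ip f f * ip g g.
Proof.
apply: quadratic_discriminant (ip_ge0 g) _ => t.
have -> : ip f f - 2 * t * ip f g + t * t * ip g g =
          ip (fun z => f z - t * g z) (fun z => f z - t * g z).
  rewrite /ip -!rsum_scal -rsum_sub -rsum_add; apply: rsum_ext => z; ring.
exact: ip_ge0.
Qed.

Lemma irreducible_closure (S : 'I_n -> Prop) z0 : S z0 ->
  (forall w v, S w -> 0 < P w v -> S v) -> forall v, S v.
Proof.
move=> h0 hcl v; have [t ht] := hI z0 v.
elim: t v ht => [|t IH] v /=.
  rewrite mxE; case: eqP => [<- //|_]; rewrite GRing.mulr0n.
  by unfold_R_ring_ops; lra.
rewrite mxE => hpos.
have [u hu] := rsum_pos_ex (F := fun u => mpow P t z0 u * P u v) hpos.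
have hPu := P_ge0 u v.
have hP : 0 < P u v by case: (Rle_lt_or_eq_dec _ _ hPu) => // e; rewrite -e in hu; lra.
have hm : 0 < mpow P t z0 u.
  apply: Rnot_le_lt => hle.
  suff : mpow P t z0 u * P u v <= 0 by lra.
  nra.
exact: hcl _ _ (IH _ hm) hP.
Qed.

Lemma pi_pos z : 0 < pi z.
Proof.
have [z0 hz0] : exists z0, 0 < pi z0 by apply: rsum_pos_ex; rewrite pi_sum; lra.
apply: (irreducible_closure (S := fun z => 0 < pi z) hz0) => w v hw hp.
have := hR w v; have := pi_ge0 v => h1 h2.
by case: (Rle_lt_or_eq_dec _ _ h1) => // e; rewrite -e in h2; nra.
Qed.

Lemma max_propagates (g : 'I_n -> R) zm w v :
  (forall z, g z <= g zm) -> g w = g zm -> g w <= Pv g w -> 0 < P w v ->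
  g v = g zm.
Proof.
move=> hmax hw hsub hP.
have hs : rsum (fun u => P w u * (g zm - g u)) <= 0.
  rewrite (rsum_ext (G := fun u => g zm * P w u - P w u * g u)); last by move=> u; ring.
  by rewrite rsum_sub rsum_scal P_row; move: hsub; rewrite /Pv hw; lra.
have hnn : forall u, 0 <= P w u * (g zm - g u).
  by move=> u; have := P_ge0 w u; have := hmax u; nra.
have := rsum_eq0_each hnn hs v => e.
suff : g zm - g v = 0 by lra.
by apply: (Rmult_eq_reg_l (P w v)); [rewrite e; ring | lra].
Qed.

Lemma harmonic_const (g : 'I_n -> R) : (forall z, Pv g z = g z) -> forall z w, g z = g w.
Proof.
move=> hg; have [zm hzm] := finite_argmax g.
suff hall : forall v, g v = g zm by move=> z w; rewrite !hall.
apply: (irreducible_closure (S := fun v => g v = g zm) (z0 := zm) erefl).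
by move=> w v hw; apply: max_propagates => //; rewrite hg; apply: Rle_refl.
Qed.

Definition Mv (M : 'M[R]_n) (f : 'I_n -> R) (z : 'I_n) : R := rsum (fun w => M z w * f w).

Lemma Mv_mul (A B : 'M[R]_n) f : Mv (A * B)%R f = Mv A (Mv B f).
Proof.
apply: functional_extensionality => z; rewrite /Mv.
rewrite (rsum_ext (F := fun w => (A * B)%R z w * f w)
                  (G := fun w => rsum (fun u => A z u * B u w * f w))); last first.
  move=> w; rewrite [(A * B)%R z w]mxE.
  transitivity (rsum (fun u => A z u * B u w) * f w); first by [].
  by rewrite Rmult_comm -rsum_scal; apply: rsum_ext => u; ring.
rewrite rsum_exch; apply: rsum_ext => u.
by rewrite -rsum_scal; apply: rsum_ext => w; ring.
Qed.

Lemma Mv_scalar a f : Mv a%:M f = fun z => a * f z.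
Proof.
apply: functional_extensionality => z; rewrite /Mv (rsum_D1 _ z) !mxE eqxx GRing.mulr1n.
rewrite (rsum_ext (G := fun _ => 0)) ?rsum0; first by unfold_R_ring_ops; ring.
move=> w; case: eqP => //= hw; rewrite !mxE.
have -> : (z == w) = false by apply/eqP => e; apply: hw; rewrite e.
by rewrite GRing.mulr0n; unfold_R_ring_ops; ring.
Qed.

Lemma Mv_shift a f : Mv (P - a%:M)%R f = fun z => Pv f z - a * f z.
Proof.
have -> : Mv (P - a%:M)%R f = fun z => Mv P f z - Mv a%:M f z.
  apply: functional_extensionality => z; rewrite /Mv -rsum_sub.
  by apply: rsum_ext => w; rewrite !mxE; unfold_R_ring_ops; ring.
by rewrite Mv_scalar.
Qed.

Definition shifted_apply (r : seq R) (f : 'I_n -> R) : 'I_n -> R :=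
  foldr (fun a g z => Pv g z - a * g z) f r.

Lemma Mv_prod (r : seq R) f : Mv (\prod_(a <- r) (P - a%:M))%R f = shifted_apply r f.
Proof.
elim: r => [|a r IH] /=; last by rewrite big_cons Mv_mul IH Mv_shift.
rewrite big_nil (_ : 1%R = 1%:M)%R // Mv_scalar.
by apply: functional_extensionality => z; unfold_R_ring_ops; ring.
Qed.

Lemma cayley_hamilton_apply (s : seq R) :
  char_poly P = (\prod_(a <- s) ('X - a%:P))%R -> forall f, shifted_apply s f = fun _ => 0.
Proof.
move=> hc f.
have h0 : (\prod_(a <- s) (P - a%:M))%R = 0%R.
  have := Cayley_Hamilton P; rewrite hc GRing.rmorph_prod => <-.
  by apply: eq_bigr => a _; rewrite GRing.rmorphB /= horner_mx_X horner_mx_C.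
rewrite -Mv_prod h0; apply: functional_extensionality => z.
by rewrite /Mv (rsum_ext (G := fun _ => 0)) ?rsum0 // => w; rewrite mxE; unfold_R_ring_ops; ring.
Qed.

(* 1 is an eigenvalue: the constants are fixed by P. *)
Lemma one_is_eigenvalue (s : seq R) :
  char_poly P = (\prod_(a <- s) ('X - a%:P))%R -> List.In 1 s.
Proof.
move=> hc; have := cayley_hamilton_apply hc (fun _ => 1).
have -> : shifted_apply s (fun _ => 1) = fun _ => \big[Rmult/1]_(a <- s) (1 - a).
  elim: s {hc} => [|a s IH] /=; first by rewrite big_nil.
  by rewrite IH Pv_const big_cons; apply: functional_extensionality => z; ring.
move/(congr1 (fun F => F ord0)) => /=.
elim: s {hc} => [|a s IH] /=; first by rewrite big_nil; lra.
rewrite big_cons => /Rmult_integral [h|h]; [left; lra|right; exact: IH].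
Qed.

(* If 1 :: rest are the eigenvalues, prod_(a <- rest) (P - a) kills every
   mean-zero function: it maps it to a mean-zero harmonic function. *)
Lemma shifted_apply_rest_mean0 rest g :
  char_poly P = (\prod_(a <- 1 :: rest) ('X - a%:P))%R -> mean g = 0 ->
  shifted_apply rest g = fun _ => 0.
Proof.
move=> hc hg; set h := shifted_apply rest g.
have hharm : forall z, Pv h z = h z.
  move=> z; move: (congr1 (fun F => F z) (cayley_hamilton_apply hc g)).
  by rewrite /= -/h; unfold_R_ring_ops; lra.
have hcst := harmonic_const hharm.
have hm : mean h = 0.
  rewrite /h; elim: (rest) => [|a r IH] //=.
  by rewrite mean_lin mean_Pv IH; ring.
have : mean h = h ord0.
  rewrite /mean (rsum_ext (G := fun z => h ord0 * pi z)); last by move=> z; rewrite (hcst z ord0); ring.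
  by rewrite rsum_scal pi_sum; ring.
by move=> e; apply: functional_extensionality => z; rewrite (hcst z ord0); lra.
Qed.

Definition Pk (k : nat) (f : 'I_n -> R) : 'I_n -> R := iter k Pv f.

Lemma Pk_lin k f g a : Pk k (fun z => f z - a * g z) = fun z => Pk k f z - a * Pk k g z.
Proof. by elim: k => [|k IH] //=; rewrite IH Pv_lin. Qed.

Lemma Pk_zero k : Pk k (fun _ => 0) = fun _ => 0.
Proof. by elim: k => [|k IH] //=; rewrite IH Pv_const. Qed.

Lemma Pk_S k f : Pk k (Pv f) = Pk k.+1 f.
Proof. by rewrite /Pk iterSr. Qed.

Lemma ip_Pk k f g : ip (Pk k f) g = ip f (Pk k g).
Proof. by elim: k g => [|k IH] g //=; rewrite -ip_Pv IH Pk_S. Qed.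

Lemma shift_poly_correlation r f g k :
  shift_poly r (fun k => ip f (Pk k g)) k = ip f (Pk k (shifted_apply r g)).
Proof. by elim: r k => [|a r IH] k //=; rewrite /shift_sub !IH Pk_lin ip_lin2 Pk_S. Qed.

Lemma rayleigh_bound rest rho f :
  char_poly P = (\prod_(a <- 1 :: rest) ('X - a%:P))%R ->
  0 < rho -> (forall a, List.In a rest -> Rabs a <= rho) -> mean f = 0 ->
  ip f (Pv f) <= rho * ip f f.
Proof.
move=> hc hr hin hf; set a := fun k => ip f (Pk k f).
have hrec : forall k, shift_poly rest a k = 0.
  by move=> k; rewrite shift_poly_correlation shifted_apply_rest_mean0 // Pk_zero ip_zero.
have [E [hE hgrowth]] := annihilated_growth hr hin hrec.
apply: (log_convex_ratio_bound (a := a) hr (ip_ge0 f) hE _ hgrowth) => j.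
have := cauchy_schwarz f (Pk j f).
by rewrite /a ip_Pk /Pk -iterD addnn -mul2n.
Qed.

Definition Lap (f : 'I_n -> R) (z : 'I_n) : R := f z - Pv f z.

Lemma Lap_as_lin f : Lap f = fun z => f z - 1 * Pv f z.
Proof. by apply: functional_extensionality => z; rewrite /Lap; ring. Qed.

Lemma dirichlet_gap rest rho v :
  char_poly P = (\prod_(a <- 1 :: rest) ('X - a%:P))%R ->
  0 < rho -> (forall a, List.In a rest -> Rabs a <= rho) -> mean v = 0 ->
  (1 - rho) * ip v v <= ip v (Lap v).
Proof.
move=> hc hr hin hv; have := rayleigh_bound hc hr hin hv.
by rewrite Lap_as_lin ip_lin2; lra.
Qed.

(* Combined with Cauchy-Schwarz: (1 - rho) <psi, L psi> <= <L psi, L psi>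
   for every psi (the constants are in the kernel of L). *)
Lemma laplacian_gap rest rho psi :
  char_poly P = (\prod_(a <- 1 :: rest) ('X - a%:P))%R ->
  0 < rho -> rho < 1 -> (forall a, List.In a rest -> Rabs a <= rho) ->
  (1 - rho) * ip psi (Lap psi) <= ip (Lap psi) (Lap psi).
Proof.
move=> hc hr hr1 hin; set v := fun z => psi z - mean psi * 1.
have hv : mean v = 0.
  rewrite /v mean_lin (_ : mean (fun _ => 1) = 1); first ring.
  by rewrite /mean (rsum_ext (G := pi)) ?pi_sum // => z; ring.
have hLv : Lap v = Lap psi.
  by apply: functional_extensionality => z; rewrite /Lap /v Pv_lin Pv_const; ring.
have hmL : mean (Lap psi) = 0 by rewrite Lap_as_lin mean_lin mean_Pv; ring.
have hpsi : ip v (Lap v) = ip psi (Lap psi).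
  rewrite hLv ip_sym /v ip_lin2 (_ : ip (Lap psi) (fun _ => 1) = mean (Lap psi)).
    by rewrite hmL ip_sym; ring.
  by apply: rsum_ext => z; ring.
rewrite -hpsi -hLv.
have hgap := dirichlet_gap hc hr hin hv.
have hcs := cauchy_schwarz v (Lap v).
have hvv := ip_ge0 v; have hLL := ip_ge0 (Lap v).
case: (Rle_lt_or_eq_dec _ _ hvv) => hv0; last first.
  rewrite -hv0 Rmult_0_l in hcs.
  have hzero : ip v (Lap v) = 0 by nra.
  by rewrite hzero; lra.
have hs0 : 0 <= ip v (Lap v) by nra.
have hsq := Rmult_le_compat_r _ _ _ hs0 hgap.
apply: (Rmult_le_reg_l (ip v v)) => //; rewrite /= Rmult_1_r in hcs; nra.
Qed.

Variables x y : 'I_n.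
Hypothesis hxy : x != y.

(* Mass of the chain started at x which is at z at time k and may still move
   on: at time 0 only x, later only states outside {x, y}. *)
Definition alive (k : nat) (z : 'I_n) : R :=
  if (k == 0)%N || ((z != x) && (z != y)) then fp P x y k z else 0.

Lemma fp_S k z : fp P x y k.+1 z = rsum (fun w => alive k w * P w z).
Proof.
rewrite /= /rsum big_mkcond /=; apply: eq_bigr => w _; rewrite /alive.
by case: ifP => _ //; unfold_R_ring_ops; ring.
Qed.

Lemma fp_ge0 k z : 0 <= fp P x y k z.
Proof.
elim: k z => [|k IH] z; first by rewrite /=; case: eqP => _; unfold_R_ring_ops; lra.
rewrite fp_S; apply: rsum_ge0 => w; apply: Rmult_le_pos; last exact: P_ge0.
by rewrite /alive; case: ifP => _; [apply: IH | apply: Rle_refl].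
Qed.

Lemma alive_ge0 k z : 0 <= alive k z.
Proof. by rewrite /alive; case: ifP => _; [apply: fp_ge0 | apply: Rle_refl]. Qed.

Lemma alive0x : alive 0 x = 1.
Proof. by rewrite /alive /= eqxx. Qed.

Lemma alive0 z : z != x -> alive 0 z = 0.
Proof. by move=> hz; rewrite /alive /= (negbTE hz). Qed.

Lemma aliveSx k : alive k.+1 x = 0.
Proof. by rewrite /alive /= eqxx. Qed.

Lemma alive_y k : alive k y = 0.
Proof. by case: k => [|k]; [apply: alive0; rewrite eq_sym | rewrite /alive /= eqxx andbF]. Qed.

Lemma aliveS_int k z : z != x -> z != y -> alive k.+1 z = fp P x y k.+1 z.
Proof. by move=> h1 h2; rewrite /alive /= h1 h2. Qed.

Fixpoint green (K : nat) (z : 'I_n) : R :=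
  if K is K'.+1 then green K' z + alive K z else alive 0 z.

Fixpoint green_next (K : nat) (z : 'I_n) : R :=
  if K is K'.+1 then green_next K' z + fp P x y K.+1 z else fp P x y 1 z.

Definition escape_partial (K : nat) : R := sum_f_R0 (escape_term P x y) K.

Definition alive_mass (K : nat) : R := rsum (alive K.+1).

Lemma green_ge0 K z : 0 <= green K z.
Proof. by elim: K => [|K IH] /=; [apply: alive_ge0 | have := alive_ge0 K.+1 z; lra]. Qed.

Lemma green_x K : green K x = 1.
Proof. by elim: K => [|K IH] /=; [apply: alive0x | rewrite IH aliveSx Rplus_0_r]. Qed.

Lemma green_y K : green K y = 0.
Proof. by elim: K => [|K IH] /=; [apply: alive_y | rewrite IH alive_y Rplus_0_r]. Qed.

Lemma green_P K z : rsum (fun w => green K w * P w z) = green_next K z.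
Proof.
elim: K => [|K IH]; first by change (green_next 0 z) with (fp P x y 1 z); rewrite fp_S.
change (green_next K.+1 z) with (green_next K z + fp P x y K.+2 z).
change (green K.+1) with (fun w => green K w + alive K.+1 w).
by rewrite -IH fp_S -rsum_add; apply: rsum_ext => w; ring.
Qed.

Lemma green_next_y K : green_next K y = escape_partial K.
Proof. by elim: K => [|K IH] //=; rewrite IH. Qed.

Lemma green_next_int K z : z != x -> z != y -> green_next K z = green K z + alive K.+1 z.
Proof.
move=> h1 h2; elim: K => [|K IH].
  change (fp P x y 1 z = alive 0 z + alive 1 z).
  by rewrite alive0 // Rplus_0_l aliveS_int.
change (green_next K z + fp P x y K.+2 z = (green K z + alive K.+1 z) + alive K.+2 z).
by rewrite IH (aliveS_int K.+1 h1 h2); ring.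
Qed.

Lemma escape_partial_ge0 K : 0 <= escape_partial K.
Proof.
elim: K => [|K IH]; first exact: fp_ge0.
by rewrite /escape_partial /= -/(escape_partial K); have := fp_ge0 K.+2 y; rewrite /escape_term; lra.
Qed.

Lemma alive_mass_ge0 K : 0 <= alive_mass K.
Proof. by apply: rsum_ge0 => z; apply: alive_ge0. Qed.

Lemma alive_mass_int K :
  alive_mass K = rsum (fun z => if (z != x) && (z != y) then alive K.+1 z else 0).
Proof. by rewrite /alive_mass (rsum_D2 _ hxy) aliveSx alive_y !Rplus_0_l. Qed.

Definition psi K (z : 'I_n) : R := green K z / pi z.

Lemma psi_x K : psi K x = / pi x.
Proof. by rewrite /psi green_x /Rdiv Rmult_1_l. Qed.

Lemma psi_y K : psi K y = 0.
Proof. by rewrite /psi green_y /Rdiv Rmult_0_l. Qed.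

Definition residual K z : R := green K z - green_next K z.

Lemma Lap_psi K z : Lap (psi K) z = residual K z / pi z.
Proof.
have Pv_psi : Pv (psi K) z = green_next K z / pi z.
  have hz := pi_pos z.
  rewrite /Pv -green_P /Rdiv Rmult_comm -rsum_scal; apply: rsum_ext => w.
  have hw := pi_pos w; have e := hR z w.
  have e' : @eq R (P w z) (pi z * P z w / pi w).
    by apply: (Rmult_eq_reg_l (pi w)); [rewrite e; field | ]; lra.
  by rewrite /psi e'; unfold_R_ring_ops; field; lra.
by rewrite /Lap Pv_psi /psi /residual; field; have := pi_pos z; lra.
Qed.

Lemma residual_int K z : z != x -> z != y -> residual K z = - alive K.+1 z.
Proof. by move=> h1 h2; rewrite /residual green_next_int //; ring. Qed.

Lemma residual_y K : residual K y = - escape_partial K.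
Proof. by rewrite /residual green_y green_next_y; ring. Qed.

(* Conservation of mass: the residual sums to zero, which determines its
   value at x. *)
Lemma residual_x K : residual K x = escape_partial K + alive_mass K.
Proof.
have hsum : rsum (residual K) = 0.
  rewrite /residual rsum_sub
    (rsum_ext (F := green_next K) (G := fun z => rsum (fun w => green K w * P w z)));
    last by move=> z; rewrite green_P.
  rewrite rsum_exch (rsum_ext (G := green K)); first lra.
  by move=> w; rewrite rsum_scal P_row; ring.
rewrite (rsum_D2 _ hxy) residual_y in hsum.
suff : rsum (fun z => if (z != x) && (z != y) then residual K z else 0) = - alive_mass K by lra.
rewrite alive_mass_int -rsum_opp; apply: rsum_ext => z.
by case: ifP => [/andP [h1 h2]|_]; [rewrite residual_int | ring].
Qed.

(* Maximum principle: psi_K <= psi_K(x) = 1 / pi(x). *)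
Lemma psi_le K z : psi K z <= / pi x.
Proof.
have [zm hzm] := finite_argmax (psi K).
have hx := psi_x K; have hy := psi_y K.
have hpx := pi_pos x; have hix : 0 < / pi x by apply: Rinv_0_lt_compat.
suff : psi K zm <= / pi x by have := hzm z; lra.
apply: Rnot_lt_le => hlt.
have hsub : forall w, psi K w = psi K zm -> psi K w <= Pv (psi K) w.
  move=> w hw.
  have hwx : w != x by apply/eqP => e; move: hw; rewrite e; lra.
  have hwy : w != y by apply/eqP => e; move: hw; rewrite e; lra.
  have : Lap (psi K) w <= 0.
    rewrite Lap_psi residual_int // /Rdiv -Ropp_mult_distr_l.
    by have := Rdiv_nonneg (alive_ge0 K.+1 w) (pi_pos w); rewrite /Rdiv; lra.
  by rewrite /Lap; lra.
have hall := irreducible_closure (S := fun v => psi K v = psi K zm) (z0 := zm) erefl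
  (fun w v hw => max_propagates hzm hw (hsub w hw)).
by have := hall x; lra.
Qed.

Definition inv_pi_sum : R := rsum (fun z => / pi z).

Lemma energy_lower K : escape_partial K / pi x <= ip (psi K) (Lap (psi K)).
Proof.
have hpx := pi_pos x.
have -> : ip (psi K) (Lap (psi K)) = rsum (fun z => psi K z * residual K z).
  by apply: rsum_ext => z; rewrite Lap_psi; field; have := pi_pos z; lra.
rewrite (rsum_D2 _ hxy) residual_x residual_y psi_x psi_y Rmult_0_l.
suff : - (alive_mass K / pi x) <=
       rsum (fun z => if (z != x) && (z != y) then psi K z * residual K z else 0).
  have -> : / pi x * (escape_partial K + alive_mass K) =
            escape_partial K / pi x + alive_mass K / pi x by field; lra.
  lra.
rewrite alive_mass_int /Rdiv Rmult_comm -rsum_scal -rsum_opp.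
apply: rsum_le => z; case: ifP => [/andP [h1 h2]|_]; last lra.
rewrite residual_int //.
have := psi_le K z; have := alive_ge0 K.+1 z.
have : 0 <= psi K z by apply: Rdiv_nonneg; [apply: green_ge0 | apply: pi_pos].
nra.
Qed.

Lemma laplacian_norm_upper K :
  ip (Lap (psi K)) (Lap (psi K)) <=
  (escape_partial K + alive_mass K) ^ 2 / pi x + (escape_partial K) ^ 2 / pi y
  + (alive_mass K) ^ 2 * inv_pi_sum.
Proof.
have -> : ip (Lap (psi K)) (Lap (psi K)) = rsum (fun z => residual K z ^ 2 / pi z).
  by apply: rsum_ext => z; rewrite Lap_psi; field; have := pi_pos z; lra.
rewrite (rsum_D2 _ hxy) residual_x residual_y.
have -> : (- escape_partial K) ^ 2 = escape_partial K ^ 2 by ring.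
suff : rsum (fun z => if (z != x) && (z != y) then residual K z ^ 2 / pi z else 0)
       <= alive_mass K ^ 2 * inv_pi_sum by lra.
rewrite /inv_pi_sum -rsum_scal; apply: rsum_le => z.
have hz := pi_pos z; have hiz : 0 < / pi z by apply: Rinv_0_lt_compat.
case: ifP => [/andP [h1 h2]|_]; last by have := pow2_ge_0 (alive_mass K); nra.
rewrite residual_int // /Rdiv; apply: Rmult_le_compat_r; first lra.
have hl := alive_ge0 K.+1 z.
have hlm : alive K.+1 z <= alive_mass K by apply: rsum_ge_term => u; apply: alive_ge0.
have -> : (- alive K.+1 z) ^ 2 = alive K.+1 z ^ 2 by ring.
by apply: pow_incr; lra.
Qed.

Lemma truncated_escape_inequality K rho rest :
  char_poly P = (\prod_(a <- 1 :: rest) ('X - a%:P))%R ->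
  0 < rho -> rho < 1 -> (forall a, List.In a rest -> Rabs a <= rho) ->
  (1 - rho) * (escape_partial K / pi x) <=
  (escape_partial K + alive_mass K) ^ 2 / pi x + (escape_partial K) ^ 2 / pi y
  + (alive_mass K) ^ 2 * inv_pi_sum.
Proof.
move=> hc hr hr1 hin.
have := laplacian_gap (psi K) hc hr hr1 hin.
have := Rmult_le_compat_l _ _ _ (ltac:(lra) : 0 <= 1 - rho) (energy_lower K).
have := laplacian_norm_upper K; lra.
Qed.

Lemma green_mass K : rsum (green K) <= / pi x.
Proof.
apply: Rle_trans (_ : rsum (fun z => / pi x * pi z) <= _).
  apply: rsum_le => z; have hz := pi_pos z.
  have -> : green K z = psi K z * pi z by rewrite /psi; field; lra.
  by apply: Rmult_le_compat_r; [lra | apply: psi_le].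
by rewrite rsum_scal pi_sum Rmult_1_r; apply: Rle_refl.
Qed.

Lemma alive_mass_small eps k0 : 0 < eps -> exists K, (k0 <= K)%N /\ alive_mass K <= eps.
Proof.
move=> he; apply: NNPP => hn.
have hall : forall K, (k0 <= K)%N -> eps < alive_mass K.
  by move=> K hK; apply: Rnot_le_lt => hle; apply: hn; exists K.
have grow : forall j, INR j * eps <= rsum (green (k0 + j)).
  elim=> [|j IH]; first by rewrite /= Rmult_0_l; apply: rsum_ge0 => z; apply: green_ge0.
  rewrite addnS S_INR.
  change (green (k0 + j).+1) with (fun z => green (k0 + j) z + alive (k0 + j).+1 z).
  by rewrite rsum_add; have := hall (k0 + j)%N (leq_addr _ _); rewrite /alive_mass; lra.
have [j hj] := INR_archimed eps (/ pi x) he.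
by have := grow j; have := green_mass (k0 + j); lra.
Qed.

Lemma escape_partial_le p K : escape_prob P x y p -> escape_partial K <= p.
Proof. by move=> hp; apply: (partial_sum_le _ hp) => k; apply: fp_ge0. Qed.

Lemma escape_term_pos : exists k, 0 < escape_term P x y k.
Proof.
apply: NNPP => hnone.
have hreach : forall v, exists k, 0 < alive k v.
  apply: (irreducible_closure (S := fun v => exists k, 0 < alive k v) (z0 := x)).
    by exists 0%N; rewrite alive0x; lra.
  move=> w v [k hk] hP.
  have hf : 0 < fp P x y k.+1 v.
    rewrite fp_S; apply: Rlt_le_trans (rsum_ge_term (F := fun u => alive k u * P u v) w _).
      exact: Rmult_lt_0_compat.
    by move=> u; apply: Rmult_le_pos; [apply: alive_ge0 | apply: P_ge0].
  case: (eqVneq v x) => [->|hvx]; first by exists 0%N; rewrite alive0x; lra.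
  case: (eqVneq v y) => [hvy|hvy]; first by case: hnone; exists k; rewrite hvy in hf.
  by exists k.+1; rewrite aliveS_int.
by have [k] := hreach y; rewrite alive_y; lra.
Qed.

Lemma escape_pos p : escape_prob P x y p -> 0 < p.
Proof.
move=> hp; have [k hk] := escape_term_pos.
apply: Rlt_le_trans hk (Rle_trans _ _ _ _ (escape_partial_le k hp)).
case: k => [|k]; first exact: Rle_refl.
rewrite /escape_partial /= -/(escape_partial k); have := escape_partial_ge0 k; lra.
Qed.

Lemma escape_gap_inequality rest lam p :
  char_poly P = (\prod_(a <- 1 :: rest) ('X - a%:P))%R ->
  0 <= lam -> lam < 1 -> (forall a, List.In a rest -> Rabs a <= lam) ->
  escape_prob P x y p ->
  (1 - lam) * (p * / pi x) <= p ^ 2 * / pi x + p ^ 2 * / pi y.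
Proof.
move=> hc hl0 hl1 hin hp.
have hp0 := Rlt_le _ _ (escape_pos hp).
have hix : 0 < / pi x by apply/Rinv_0_lt_compat/pi_pos.
have hiy : 0 < / pi y by apply/Rinv_0_lt_compat/pi_pos.
have hB : 0 <= inv_pi_sum by apply: rsum_ge0 => z; apply/Rlt_le/Rinv_0_lt_compat/pi_pos.
apply: (le_of_perturbations (e0 := 1 - lam)); first lra.
move=> e he he1; have [N hN] := hp e he.
have [K [hK hm]] := alive_mass_small N he.
have hin' : forall a, List.In a rest -> Rabs a <= lam + e by move=> a ha; have := hin a ha; lra.
have := truncated_escape_inequality K (rho := lam + e) hc (ltac:(lra)) (ltac:(lra)) hin'; rewrite /Rdiv.
apply: (perturbed_escape_bound hl0 hp0 hix hiy hB he (ltac:(lra)) (escape_partial_ge0 K)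
  (hN K (elimT leP hK)) (alive_mass_ge0 K) hm).
Qed.

End ReversibleChain.

Lemma bigRmin_le n (F : 'I_n -> R) a z : \big[Rmin/a]_(i < n) F i <= F z.
Proof.
have : z \in index_enum 'I_n by rewrite mem_index_enum.
elim: (index_enum 'I_n) => [|h l IH] //= hz; rewrite big_cons.
case: (eqVneq z h) => [<-|hne]; first exact: Rmin_l.
by apply: Rle_trans (Rmin_r _ _) (IH _); move: hz; rewrite inE (negbTE hne).
Qed.

Lemma bigRmax_ge n (F : 'I_n -> R) a z : F z <= \big[Rmax/a]_(i < n) F i.
Proof.
have : z \in index_enum 'I_n by rewrite mem_index_enum.
elim: (index_enum 'I_n) => [|h l IH] //= hz; rewrite big_cons.
case: (eqVneq z h) => [<-|hne]; first exact: Rmax_l.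
by apply: Rle_trans (IH _) (Rmax_r _ _); move: hz; rewrite inE (negbTE hne).
Qed.

Lemma bigRmin_ge0 n (F : 'I_n -> R) a : 0 <= a -> (forall z, 0 <= F z) ->
  0 <= \big[Rmin/a]_(i < n) F i.
Proof. by move=> ha hF; apply: (big_ind (fun v => 0 <= v)) => // u v; apply: Rmin_glb. Qed.

Lemma slem_ge0 (s : seq R) : 0 <= slem s.
Proof.
apply: (big_ind (fun v => 0 <= v)); first exact: Rle_refl.
  by move=> u v hu _; apply: Rle_trans hu (Rmax_l _ _).
by move=> i _; apply: Rabs_pos.
Qed.

Lemma slem_ge (rest : seq R) a b : List.In b rest -> Rabs b <= slem (a :: rest).
Proof.
rewrite /slem /=; elim: rest => [|h l IH] //= [->|hb]; rewrite big_cons.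
  exact: Rmax_l.
exact: Rle_trans (IH hb) (Rmax_r _ _).
Qed.

Lemma eigenvalues_head_one (s : seq R) :
  List.In 1 s -> slem s < 1 -> exists rest, s = 1 :: rest.
Proof.
case: s => [|a rest] //= h1 hlam; exists rest; congr (_ :: _).
case: h1 => // hin; have := slem_ge a hin; rewrite Rabs_R1; lra.
Qed.

Lemma escape_ratio_bound L p px py M mn :
  0 < px -> 0 < py -> px <= M -> py <= M -> mn <= py -> 0 < L -> 0 < p ->
  L * (p * / px) <= p ^ 2 * / px + p ^ 2 * / py ->
  1 / 2 * L * mn / M <= p.
Proof.
move=> hx hy hxM hyM hmn hL hp h.
have hM : 0 < M by lra.
have hcleared : L * py <= p * (py + px).
  have e1 : L * (p * / px) * (px * py / p) = L * py by field; lra.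
  have e2 : (p ^ 2 * / px + p ^ 2 * / py) * (px * py / p) = p * (py + px) by field; lra.
  rewrite -e1 -e2; apply: Rmult_le_compat_r => //.
  by apply/Rlt_le/Rdiv_lt_0_compat; nra.
apply: (Rmult_le_reg_r (2 * M)); first lra.
have -> : 1 / 2 * L * mn / M * (2 * M) = L * mn by field; lra.
have : L * mn <= L * py by apply: Rmult_le_compat_l; lra.
have : p * (py + px) <= p * (2 * M) by apply: Rmult_le_compat_l; lra.
lra.
Qed.

Theorem mainTheorem2 :
  exists c : R, 0 < c /\
  forall (n : nat) (P : 'M[R]_n) (pi : 'I_n -> R),
    transition_matrix P -> irreducible P -> aperiodic P ->
    probability pi -> reversible P pi ->
    forall s : seq R, eigenvalue_list P s ->
    forall x y : 'I_n, x <> y ->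
    forall p : R, escape_prob P x y p ->
      c * (1 - slem s) * pi_min pi x / pi_max pi x <= p.
Proof.
exists (1 / 2); split; first lra.
move=> [|n'] P pi hT hI _ hpi hR s [hchar _] x y hxy p hp; first by case: (x).
have hxy' : x != y by apply/eqP.
have hp0 := escape_pos hT hI hxy' hp.
have hpi0 := pi_pos hT hI hpi hR.
have hmax : 0 < pi_max pi x := Rlt_le_trans _ _ _ (hpi0 x) (bigRmax_ge _ _ x).
case: (Rle_lt_dec 1 (slem s)) => hlam.
  have hmin : 0 <= pi_min pi x by apply: bigRmin_ge0 => [|z]; apply: Rlt_le.
  have hinv : 0 < / pi_max pi x by apply: Rinv_0_lt_compat.
  have hnum : 1 / 2 * (1 - slem s) * pi_min pi x <= 0 by nra.
  have := Rmult_le_compat_r _ _ _ (Rlt_le _ _ hinv) hnum; rewrite /Rdiv; lra.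
have [rest hs] := eigenvalues_head_one (one_is_eigenvalue hT hchar) hlam.
rewrite {}hs in hchar hlam *.
have hgap := escape_gap_inequality hT hI hpi hR hxy' hchar (slem_ge0 _) hlam
  (fun a => @slem_ge rest 1 a) hp.
have hL : 0 < 1 - slem (1 :: rest) by lra.
exact: escape_ratio_bound (hpi0 x) (hpi0 y) (bigRmax_ge _ _ x) (bigRmax_ge _ _ y)
  (bigRmin_le _ _ y) hL hp0 hgap.
Qed.
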